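(* Let $G$ be a (finite or infinite) group with identity $\mathbf{1}$. If $G$ is not a hamiltonian $2$-group, then the complete graph $\mathrm{Cay}(G; G\setminus\{\mathbf{1}\})$ is strongly CCA.
   Context: A hamiltonian $2$-group is a group isomorphic to $Q_8\times B$, where $Q_8$ is the quaternion group of order $8$ and $B$ is an abelian group with $b^2=\mathbf{1}$ for all $b\in B$. For an inverse-closed subset $S$ of $G$, $\mathrm{Cay}(G;S)$ has vertex set $G$ and an edge from $g$ to $gs$ for each $g\in G$, $s\in S$; the edge $g$—$gs$ is coloured $\{s,s^{-1}\}$. A graph automorphism is colour-permuting if whenever two edges have the same colour their images also have the same colour. A map $\varphi\colon G\to G$ is affine if $\varphi(x)=\alpha(gx)$ for some $\alpha\in\mathrm{Aut}(G)$, $g\in G$. The Cayley graph is strongly CCA if every colour-permuting automorphism of it is affine. *)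

Set Implicit Arguments.

Record Grp := {
  carrier :> Type;
  gmul : carrier -> carrier -> carrier;
  ginv : carrier -> carrier;
  gone : carrier;
  gmulA : forall x y z, gmul x (gmul y z) = gmul (gmul x y) z;
  gmul1 : forall x, gmul gone x = x;
  gmulV : forall x, gmul (ginv x) x = gone
}.

Arguments gmul {g}.
Arguments ginv {g}.
Arguments gone {g}.

Definition bijective {A B : Type} (f : A -> B) : Prop :=
  exists g : B -> A, (forall x, g (f x) = x) /\ (forall y, f (g y) = y).

Inductive QU := Q1 | Qi | Qj | Qk.

(* product of units: (negative sign?, unit) *)
Definition qumul (a b : QU) : bool * QU :=
  match a, b with
  | Q1, x => (false, x)
  | x, Q1 => (false, x)
  | Qi, Qi => (true, Q1) | Qj, Qj => (true, Q1) | Qk, Qk => (true, Q1)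
  | Qi, Qj => (false, Qk) | Qj, Qi => (true, Qk)
  | Qj, Qk => (false, Qi) | Qk, Qj => (true, Qi)
  | Qk, Qi => (false, Qj) | Qi, Qk => (true, Qj)
  end.

Definition Q8 := (bool * QU)%type.

Definition q8mul (x y : Q8) : Q8 :=
  let (s, c) := qumul (snd x) (snd y) in (xorb (xorb (fst x) (fst y)) s, c).

Lemma q8mulA (x y z : Q8) : q8mul x (q8mul y z) = q8mul (q8mul x y) z.
Proof.
  destruct x as [[|] [| | |]], y as [[|] [| | |]], z as [[|] [| | |]];
  reflexivity.
Qed.

Definition hamiltonian2 (G : Grp) : Prop :=
  exists B : Grp,
    (forall a b : B, gmul a b = gmul b a) /\
    (forall b : B, gmul b b = gone) /\
    exists f : G -> (Q8 * B)%type,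
      bijective f /\
      forall x y : G,
        f (gmul x y) = (q8mul (fst (f x)) (fst (f y)), gmul (snd (f x)) (snd (f y))).

(* Cay(G;S): edge between g and g s for s in S; i.e. u ~ v iff u^-1 v in S. *)
Definition cay_adj {G : Grp} (S : G -> Prop) (u v : G) : Prop :=
  S (gmul (ginv u) v).

(* colour of the edge {u, v} (with v = u s) is the set {s, s^-1}
   = {u^-1 v, v^-1 u} *)
Definition edge_colour {G : Grp} (u v : G) : G -> Prop :=
  fun x => x = gmul (ginv u) v \/ x = gmul (ginv v) u.

Definition same_colour {G : Grp} (u v u' v' : G) : Prop :=
  forall x, edge_colour u v x <-> edge_colour u' v' x.

Definition graph_aut {G : Grp} (S : G -> Prop) (phi : G -> G) : Prop :=
  bijective phi /\ forall u v, cay_adj S u v <-> cay_adj S (phi u) (phi v).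

Definition colour_permuting {G : Grp} (S : G -> Prop) (phi : G -> G) : Prop :=
  graph_aut S phi /\
  forall u v u' v', cay_adj S u v -> cay_adj S u' v' ->
    same_colour u v u' v' -> same_colour (phi u) (phi v) (phi u') (phi v').

Definition group_aut {G : Grp} (alpha : G -> G) : Prop :=
  bijective alpha /\ forall x y, alpha (gmul x y) = gmul (alpha x) (alpha y).

Definition affine {G : Grp} (phi : G -> G) : Prop :=
  exists alpha g, group_aut alpha /\ forall x, phi x = alpha (gmul g x).

Definition strongly_CCA {G : Grp} (S : G -> Prop) : Prop :=
  forall phi, colour_permuting S phi -> affine phi.

From Stdlib Require Import Classical ClassicalEpsilon.
From mathcomp Require classical_sets.

(* Normalising a colour-permuting automorphism [phi] of the complete Cayley graph to
   [psi t = (phi 1)^-1 * phi t] gives a bijection with psi(xy) = psi(x) psi(y)^(+1 or -1),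
   since [psi] must send the edge {x, xy} of colour {y, y^-1} to an edge of colour
   {psi y, (psi y)^-1}.  Such a signed automorphism preserves inverses (the delicate case
   being involutions), and its failures of multiplicativity are rigid: if
   psi(xy) <> psi(x) psi(y) then xyx = y and x^2 = y^2, and psi(xy) = psi(y) psi(x).
   Twisting [psi] at x, i.e. t |-> psi^-1 (psi(x)^-1 psi(xt)), yields another signed
   automorphism, and comparing the two shows that as soon as one pair is not multiplicative,
   every non-commuting pair is not.  So either [psi] is an automorphism, and [phi] is affine,
   or G is non-abelian and every element centralises or inverts every other.  In the latter
   case two non-commuting x, y generate a copy of Q8, their common centraliser is an
   elementary abelian 2-group containing e = x^2, and a complement of <e> in it, provided by
   Zorn's lemma, splits G as Q8 x B. *)

Declare Scope group_scope.
Open Scope group_scope.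
Infix "*" := gmul : group_scope.
Notation "x ^-1" := (ginv x) : group_scope.
Notation "1" := gone : group_scope.

Section GroupFacts.
Context {G : Grp}.
Implicit Types x y z : G.

Lemma mulgA x y z : x * (y * z) = x * y * z. Proof. exact (gmulA G x y z). Qed.
Lemma mul1g x : 1 * x = x. Proof. exact (gmul1 G x). Qed.
Lemma mulVg x : x^-1 * x = 1. Proof. exact (gmulV G x). Qed.

Lemma mulKg x y : x^-1 * (x * y) = y.
Proof. now rewrite mulgA, mulVg, mul1g. Qed.

Lemma mulgI x y z : x * y = x * z -> y = z.
Proof. intro E. now rewrite <- (mulKg x y), E, mulKg. Qed.

Lemma mulgV x : x * x^-1 = 1.
Proof.
  rewrite <- (mul1g (x * x^-1)). rewrite <- (mulVg x^-1) at 1.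
  rewrite <- mulgA, (mulKg x). apply mulVg.
Qed.

Lemma mulKVg x y : x * (x^-1 * y) = y.
Proof. now rewrite mulgA, mulgV, mul1g. Qed.

Lemma mulg1 x : x * 1 = x.
Proof. now rewrite <- (mulVg x), mulKVg. Qed.

Lemma mulgK x y : y * x * x^-1 = y.
Proof. now rewrite <- mulgA, mulgV, mulg1. Qed.

Lemma mulgKV x y : y * x^-1 * x = y.
Proof. now rewrite <- mulgA, mulVg, mulg1. Qed.

Lemma mulIg x y z : y * x = z * x -> y = z.
Proof. intro E. now rewrite <- (mulgK x y), E, mulgK. Qed.

Lemma mul_eq1_invl x y : x * y = 1 -> x = y^-1.
Proof. intro E. now rewrite <- (mulgK y x), E, mul1g. Qed.

Lemma mul_eq1_invr x y : x * y = 1 -> y = x^-1.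
Proof. intro E. now rewrite <- (mulKg x y), E, mulg1. Qed.

Lemma invgK x : x^-1^-1 = x.
Proof. symmetry. apply mul_eq1_invr, mulVg. Qed.

Lemma invg_inj x y : x^-1 = y^-1 -> x = y.
Proof. intro E. now rewrite <- (invgK x), E, invgK. Qed.

Lemma invMg x y : (x * y)^-1 = y^-1 * x^-1.
Proof. symmetry. apply mul_eq1_invr. now rewrite <- mulgA, mulKVg, mulgV. Qed.

Lemma invg1 : (1 : G)^-1 = 1.
Proof. symmetry. apply mul_eq1_invr, mul1g. Qed.

Lemma invg_involution x : x * x = 1 -> x^-1 = x.
Proof. intro E. symmetry. now apply mul_eq1_invl. Qed.

Lemma involution_invg x : x^-1 = x -> x * x = 1.
Proof. intro E. rewrite <- E at 2. apply mulgV. Qed.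

Lemma commute_invl x y : x * y = y * x -> x^-1 * y = y * x^-1.
Proof.
  intro E. apply (mulgI x). now rewrite mulKVg, mulgA, E, mulgK.
Qed.

Lemma conjg_invg c x : c^-1 * x^-1 * c = (c^-1 * x * c)^-1.
Proof. rewrite !invMg, invgK. now rewrite !mulgA. Qed.

Lemma involutions_commute x y :
  x * x = 1 -> y * y = 1 -> x * y * (x * y) = 1 -> x * y = y * x.
Proof.
  intros Hx Hy Hxy. apply mul_eq1_invl in Hxy.
  now rewrite Hxy, invMg, !invg_involution.
Qed.
End GroupFacts.

Ltac gsimpl :=
  repeat first
    [ rewrite invMg | rewrite invgK | rewrite invg1 | rewrite <- mulgA
    | rewrite mul1g | rewrite mulg1 | rewrite mulVg | rewrite mulgV
    | rewrite mulKg | rewrite mulKVg ].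
Tactic Notation "gsimpl" "in" hyp(H) :=
  repeat first
    [ rewrite invMg in H | rewrite invgK in H | rewrite invg1 in H | rewrite <- mulgA in H
    | rewrite mul1g in H | rewrite mulg1 in H | rewrite mulVg in H | rewrite mulgV in H
    | rewrite mulKg in H | rewrite mulKVg in H ].
Tactic Notation "lmul" constr(c) "in" hyp(H) := apply (f_equal (gmul c)) in H; gsimpl in H.
Tactic Notation "rmul" constr(c) "in" hyp(H) :=
  apply (f_equal (fun t => t * c)) in H; gsimpl in H.

Definition quat_pair {G : Grp} (x y : G) : Prop := x * y * x = y /\ x * x = y * y.

Section QuaternionPairs.
Context {G : Grp} {x y : G} (Hq : quat_pair x y).

Lemma quat_pair_mulC : x * y = y * x^-1.
Proof. destruct Hq as [Hxyx _]. rewrite <- Hxyx at 2. now gsimpl. Qed.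

Lemma quat_pair_conjr : y^-1 * x * y = x^-1.
Proof. rewrite <- (mulgA y^-1), quat_pair_mulC. now gsimpl. Qed.

Lemma quat_pair_conjl : x * y * x^-1 = y^-1.
Proof.
  destruct Hq as [_ Hxx]. rewrite quat_pair_mulC.
  apply (mulgI y). gsimpl. rewrite mulgA, <- Hxx. now gsimpl.
Qed.

Lemma quat_pair_sym : quat_pair y x.
Proof.
  destruct Hq as [_ Hxx]. split; [|easy].
  rewrite <- (mulgA y x), quat_pair_mulC, !mulgA, <- Hxx. now gsimpl.
Qed.

Lemma quat_pair_sq_involution : x * x * (x * x) = 1.
Proof.
  destruct Hq as [_ Hxx].
  assert (Hconj : y^-1 * (x * x) * y = x^-1 * x^-1).
  { rewrite <- quat_pair_conjr. now gsimpl. }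
  rewrite Hxx in Hconj at 1. gsimpl in Hconj. rewrite <- Hxx in Hconj.
  rewrite Hconj at 1. now gsimpl.
Qed.
End QuaternionPairs.

(** * Signed automorphisms *)

Definition signed_morphism {G : Grp} (f : G -> G) : Prop :=
  forall x y, f (x * y) = f x * f y \/ f (x * y) = f x * (f y)^-1.

Record signed_aut {G : Grp} (f : G -> G) : Prop := {
  signed_aut_inj : forall x y, f x = f y -> x = y;
  signed_aut_surj : forall y, exists x, f x = y;
  signed_aut_morph : signed_morphism f }.
Arguments signed_aut_inj {G f}.
Arguments signed_aut_surj {G f}.
Arguments signed_aut_morph {G f}.

Definition hom_at {G : Grp} (f : G -> G) (x y : G) : Prop := f (x * y) = f x * f y.

Section SignedAutomorphisms.
Context {G : Grp} {f : G -> G} (Hf : signed_aut f).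

Lemma signed_aut1 : f 1 = 1.
Proof.
  destruct (signed_aut_morph Hf 1 1) as [E|E]; rewrite mulg1 in E.
  - symmetry. apply (mulgI (f 1)). now rewrite mulg1.
  - now rewrite mulgV in E.
Qed.

Lemma signed_aut_eq1 x : f x = 1 -> x = 1.
Proof. intro E. apply (signed_aut_inj Hf). now rewrite E, signed_aut1. Qed.

Lemma signed_aut_sq x : x * x <> 1 -> f (x * x) = f x * f x.
Proof.
  intro Hx. destruct (signed_aut_morph Hf x x) as [E|E]; [easy|].
  rewrite mulgV in E. now apply signed_aut_eq1 in E.
Qed.

Lemma signed_aut_invg_cases x : f x^-1 = (f x)^-1 \/ f x^-1 = f x.
Proof.
  destruct (signed_aut_morph Hf x x^-1) as [E|E];
    rewrite mulgV, signed_aut1 in E; symmetry in E; apply mul_eq1_invr in E.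
  - now left.
  - right. now apply invg_inj.
Qed.

Section InvolutionImage.
Variable x : G.
Hypothesis x2 : x * x = 1.
Local Notation a := (f x).
Hypothesis a2 : a * a <> 1.

Lemma image_commute_or_invert_or_sq c : c * c = a * a \/ a * c * a^-1 = c^-1 \/ a * c = c * a.
Proof.
  destruct (signed_aut_surj Hf c) as [k <-].
  assert (Hxxk : x * (x * k) = k) by now rewrite mulgA, x2, mul1g.
  destruct (signed_aut_morph Hf x k) as [E1|E1];
    destruct (signed_aut_morph Hf x (x * k)) as [E2|E2];
    rewrite E1, Hxxk in E2.
  - exfalso. apply a2. rmul (f k)^-1 in E2. now symmetry.
  - right; left. gsimpl in E2. rewrite E2 at 2. now gsimpl.
  - left. rmul (f k) in E2. exact E2.
  - right; right. gsimpl in E2. rewrite E2 at 2. now gsimpl.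
Qed.

Lemma involution_commutes_image c : c * c = 1 -> a * c = c * a.
Proof.
  intro Hc. destruct (image_commute_or_invert_or_sq c) as [E|[E|E]]; [| |exact E].
  - exfalso. apply a2. now rewrite <- E.
  - rewrite (invg_involution c Hc) in E. rmul a in E. exact E.
Qed.

Lemma commuting_image_inverts y :
  y * x = x * y -> y * y <> 1 -> (f y)^-1 * a * f y = a^-1.
Proof.
  intros Hyx Hyy.
  assert (Hsq : y * x * (y * x) = y * y).
  { now rewrite <- mulgA, (mulgA x), <- Hyx, <- mulgA, x2, mulg1. }
  assert (E := signed_aut_sq (y * x) ltac:(now rewrite Hsq)).
  rewrite Hsq, (signed_aut_sq y Hyy) in E.
  destruct (signed_aut_morph Hf y x) as [Eyx|Eyx]; rewrite Eyx in E.
  - lmul (f y)^-1 in E. apply mul_eq1_invl. gsimpl. rewrite <- E. now gsimpl.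
  - lmul (f y)^-1 in E. lmul a in E. rewrite <- (mulgA (f y)^-1), E. now gsimpl.
Qed.

Local Notation b := (f a).

Lemma b_inverts_a : b^-1 * a * b = a^-1.
Proof. apply commuting_image_inverts; [exact (involution_commutes_image x x2) | exact a2]. Qed.

Lemma a_b_noncommute : a * b <> b * a.
Proof.
  intro E. apply a2. assert (H := b_inverts_a).
  rewrite <- (mulgA b^-1), E in H. gsimpl in H. rewrite H at 2. apply mulgV.
Qed.

Lemma a_inverts_b : a * b * a^-1 = b^-1.
Proof.
  destruct (image_commute_or_invert_or_sq b) as [E|[E|E]]; [|exact E|now destruct a_b_noncommute].
  assert (Hab : a * b = b * a^-1) by (assert (H := b_inverts_a); now lmul b in H).
  now rewrite Hab, <- mulgA, <- invMg, <- E; gsimpl.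
Qed.

Lemma b_commutes_or_inverted_by_x : b * x = x * b \/ b * x = x * b^-1.
Proof.
  destruct (signed_aut_surj Hf x) as [k Hk].
  assert (Hkk : k * k = 1).
  { apply signed_aut_eq1.
    destruct (signed_aut_morph Hf k k) as [E|E]; rewrite E, Hk; [exact x2 | apply mulgV]. }
  assert (Hak : a * k = k * a) by (apply involution_commutes_image, Hkk).
  assert (Hak' : f (a * k) = b * x).
  { destruct (signed_aut_morph Hf a k) as [E|E]; rewrite E, Hk; [easy|].
    now rewrite (invg_involution x x2). }
  destruct (signed_aut_morph Hf k a) as [E|E]; rewrite Hk, <- Hak, Hak' in E;
    [left|right]; exact E.
Qed.

Lemma b_commutes_x_false : b * x = x * b -> False.
Proof.
  intro Hbx.
  assert (Hbb : b * b <> 1).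
  { intro E. apply a2, signed_aut_eq1. now rewrite signed_aut_sq. }
  assert (Hc : (f b)^-1 * a * f b = a^-1) by now apply commuting_image_inverts.
  assert (Habx : a * b * x = x * (a * b)).
  { rewrite <- mulgA, Hbx, mulgA, (involution_commutes_image x x2). now gsimpl. }
  assert (Habab : a * b * (a * b) <> 1).
  { intro E. apply a2. assert (H := a_inverts_b). rmul a in H.
    rewrite H in E at 1. lmul b in E. rmul b^-1 in E. exact E. }
  assert (Hd : (f (a * b))^-1 * a * f (a * b) = a^-1) by now apply commuting_image_inverts.
  apply a2, involution_invg. rewrite <- Hd.
  destruct (signed_aut_morph Hf a b) as [E|E]; rewrite E.
  - transitivity ((f b)^-1 * (b^-1 * a * b) * f b); [now gsimpl|].
    now rewrite b_inverts_a, conjg_invg, Hc, invgK.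
  - transitivity (f b * (b^-1 * a * b) * (f b)^-1); [now gsimpl|].
    rewrite b_inverts_a, <- Hc. now gsimpl.
Qed.

Lemma b_inverted_by_x_false : b * x = x * b^-1 -> False.
Proof.
  intro Hbx. apply a_b_noncommute.
  assert (Hxa : a^-1 * x = x * a^-1) by exact (commute_invl _ _ (involution_commutes_image x x2)).
  assert (Hinv : x * a^-1 * b * (x * a^-1 * b) = 1).
  { transitivity (x * (a^-1 * x) * (b^-1 * a^-1 * b)).
    - gsimpl. rewrite (mulgA b x), Hbx. now gsimpl.
    - rewrite Hxa, conjg_invg, b_inverts_a, invgK. gsimpl. exact x2. }
  apply involution_commutes_image in Hinv.
  rewrite !mulgA, (involution_commutes_image x x2) in Hinv. gsimpl in Hinv.
  apply mulgI in Hinv. now lmul a in Hinv.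
Qed.

Lemma involution_image_false : False.
Proof.
  destruct b_commutes_or_inverted_by_x as [H|H];
    [exact (b_commutes_x_false H) | exact (b_inverted_by_x_false H)].
Qed.
End InvolutionImage.

Lemma signed_aut_involution x : x * x = 1 -> f x * f x = 1.
Proof. intro x2. apply NNPP. exact (involution_image_false x x2). Qed.

Lemma signed_aut_invg x : f x^-1 = (f x)^-1.
Proof.
  destruct (signed_aut_invg_cases x) as [E|E]; [exact E|].
  assert (Hx : x^-1 = x) by exact (signed_aut_inj Hf _ _ E).
  rewrite Hx. symmetry. apply invg_involution, signed_aut_involution, involution_invg, Hx.
Qed.

Lemma not_hom_at_mul x y : ~ hom_at f x y -> f (x * y) = f x * (f y)^-1.
Proof. intro H. now destruct (signed_aut_morph Hf x y). Qed.

Lemma not_hom_at_image_sq x y : ~ hom_at f x y -> f y * f y <> 1.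
Proof.
  intros H E. apply H. unfold hom_at.
  now rewrite (not_hom_at_mul x y H), (invg_involution _ E).
Qed.

Lemma not_hom_at_image_quat x y : ~ hom_at f x y -> quat_pair (f x) (f y).
Proof.
  intro H. assert (Hm := not_hom_at_mul x y H). assert (Hb := not_hom_at_image_sq x y H).
  split.
  - destruct (signed_aut_morph Hf x^-1 (x * y)) as [E|E];
      rewrite mulKg, Hm, signed_aut_invg in E; gsimpl in E.
    + exfalso. apply Hb. rewrite E at 2. apply mulgV.
    + lmul (f x) in E. rmul (f x) in E. gsimpl. exact E.
  - assert (Hi : f (y^-1 * x^-1) = f y * (f x)^-1).
    { rewrite <- invMg, signed_aut_invg, Hm. now gsimpl. }
    destruct (signed_aut_morph Hf y^-1 x^-1) as [E|E];
      rewrite Hi, !signed_aut_invg in E; gsimpl in E.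
    + exfalso. apply Hb. rmul (f x) in E. rewrite E at 2. apply mulgV.
    + lmul (f y) in E. rmul (f x) in E. now symmetry.
Qed.

Lemma not_hom_at_flip x y : ~ hom_at f x y -> f (x * y) = f y * f x.
Proof.
  intro H. rewrite (not_hom_at_mul x y H). symmetry.
  apply quat_pair_mulC, quat_pair_sym, not_hom_at_image_quat, H.
Qed.

Lemma not_hom_at_image_noncommute x y : ~ hom_at f x y -> f x * f y <> f y * f x.
Proof. intros H E. apply H. unfold hom_at. now rewrite (not_hom_at_flip x y H). Qed.

Definition preimage (y : G) : G :=
  proj1_sig (constructive_indefinite_description _ (signed_aut_surj Hf y)).

Lemma preimageK y : f (preimage y) = y.
Proof. exact (proj2_sig (constructive_indefinite_description _ (signed_aut_surj Hf y))). Qed.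

Lemma preimage_f x : preimage (f x) = x.
Proof. apply (signed_aut_inj Hf), preimageK. Qed.

Lemma preimage_signed_aut : signed_aut preimage.
Proof.
  constructor.
  - intros u v E. now rewrite <- (preimageK u), <- (preimageK v), E.
  - intro x. exists (f x). apply preimage_f.
  - intros u v. set (x := preimage u). set (y := x^-1 * preimage (u * v)).
    assert (Hxy : preimage (u * v) = x * y) by (unfold y; now gsimpl).
    assert (Hu : f x = u) by apply preimageK.
    rewrite Hxy. destruct (signed_aut_morph Hf x y) as [E|E];
      rewrite <- Hxy, preimageK, Hu in E; apply mulgI in E.
    + left. now rewrite E, preimage_f.
    + right. now rewrite E, <- signed_aut_invg, preimage_f, invgK.
Qed.
End SignedAutomorphisms.

Section NonHomPairs.
Context {G : Grp} {f : G -> G} (Hf : signed_aut f).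

Lemma not_hom_at_quat x y : ~ hom_at f x y -> quat_pair x y.
Proof.
  intro H. rewrite <- (preimage_f Hf x), <- (preimage_f Hf y).
  apply (not_hom_at_image_quat (preimage_signed_aut Hf)).
  intro E. apply H. unfold hom_at in E |- *.
  rewrite !preimage_f in E. now rewrite <- E, preimageK.
Qed.

Lemma not_hom_at_sq x y : ~ hom_at f x y -> y * y <> 1.
Proof. intros H E. exact (not_hom_at_image_sq Hf x y H (signed_aut_involution Hf y E)). Qed.

Lemma commute_hom_at x y : x * y = y * x -> hom_at f x y.
Proof.
  intro C. apply NNPP. intro H. apply (not_hom_at_sq x y H).
  destruct (not_hom_at_quat x y H) as [Hxyx Hxx]. rewrite <- Hxx.
  rewrite C, <- mulgA in Hxyx. now lmul y^-1 in Hxyx.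
Qed.

Lemma not_hom_at_noncommute x y : ~ hom_at f x y -> x * y <> y * x.
Proof. intros H C. exact (H (commute_hom_at x y C)). Qed.

Lemma not_hom_at_sym x y : ~ hom_at f x y -> ~ hom_at f y x.
Proof.
  intros H E. apply (not_hom_at_noncommute x y H), (signed_aut_inj Hf).
  now rewrite (not_hom_at_flip Hf x y H).
Qed.

Lemma hom_at_sym x y : x * y <> y * x -> hom_at f x y -> hom_at f y x.
Proof. intros C H. apply NNPP. intro N. exact (not_hom_at_sym y x N H). Qed.

Lemma not_hom_at_invr x y : ~ hom_at f x y -> ~ hom_at f x y^-1.
Proof.
  intros H E. apply (not_hom_at_sq x y H), involution_invg, (mulgI x), (signed_aut_inj Hf).
  unfold hom_at in E. now rewrite E, (not_hom_at_mul Hf x y H), (signed_aut_invg Hf).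
Qed.

Lemma not_hom_at_invl x y : ~ hom_at f x y -> ~ hom_at f x^-1 y.
Proof. intro H. apply not_hom_at_sym, not_hom_at_invr, not_hom_at_sym, H. Qed.

Lemma not_hom_at_mulr x y : ~ hom_at f x y -> ~ hom_at f x (x * y).
Proof.
  intro H. rewrite <- (invgK x) at 1. apply not_hom_at_invl. intro E.
  unfold hom_at in E. rewrite mulKg, (not_hom_at_flip Hf x y H), (signed_aut_invg Hf) in E.
  apply (not_hom_at_image_noncommute Hf x y H). lmul (f x) in E. rewrite E at 1. now gsimpl.
Qed.

Lemma hom_at_mulr x y : hom_at f x y -> hom_at f x (x * y).
Proof.
  intro H. apply NNPP. intro N. apply (not_hom_at_invl _ _ N).
  unfold hom_at in *. rewrite mulKg, H, (signed_aut_invg Hf). now gsimpl.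
Qed.
End NonHomPairs.

Section SignedAutConstructions.
Context {G : Grp}.

Lemma signed_aut_comp {g h : G -> G} :
  signed_aut g -> signed_aut h -> signed_aut (fun t => g (h t)).
Proof.
  intros Hg Hh. constructor.
  - intros s t E. exact (signed_aut_inj Hh _ _ (signed_aut_inj Hg _ _ E)).
  - intro c. destruct (signed_aut_surj Hg c) as [u <-]. destruct (signed_aut_surj Hh u) as [v <-].
    now exists v.
  - intros s t.
    destruct (signed_aut_morph Hh s t) as [E|E]; rewrite E; [apply (signed_aut_morph Hg)|].
    destruct (signed_aut_morph Hg (h s) (h t)^-1) as [E'|E']; rewrite E', (signed_aut_invg Hg).
    + now right.
    + left. now rewrite invgK.
Qed.

Lemma signed_aut_translate {f : G -> G} (x : G) :
  signed_aut f -> signed_aut (fun t => (f x)^-1 * f (x * t)).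
Proof.
  intro Hf. constructor.
  - intros s t E. apply mulgI, (signed_aut_inj Hf), mulgI in E. exact E.
  - intro c. exists (x^-1 * preimage Hf (f x * c)). now rewrite mulKVg, preimageK, mulKg.
  - intros s t.
    assert (Ht : f t = (f x)^-1 * f (x * t) \/ f t = ((f x)^-1 * f (x * t))^-1).
    { destruct (signed_aut_morph Hf x t) as [E|E]; rewrite E; gsimpl; [left|right]; easy. }
    rewrite mulgA. destruct (signed_aut_morph Hf (x * s) t) as [E|E]; rewrite E;
      destruct Ht as [Ht|Ht]; rewrite Ht; gsimpl; auto.
Qed.

Lemma signed_aut_mul_cases {f : G -> G} :
  signed_aut f -> forall s t, f (s * t) = f s * f t \/ f (s * t) = f t * f s.
Proof.
  intros Hf s t. destruct (classic (hom_at f s t)) as [H|H]; [now left|right].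
  exact (not_hom_at_flip Hf s t H).
Qed.
End SignedAutConstructions.

Section Twist.
Context {G : Grp} {f : G -> G} (Hf : signed_aut f) (x : G).

Definition twist (t : G) : G := preimage Hf ((f x)^-1 * f (x * t)).

Lemma twist_signed_aut : signed_aut twist.
Proof. exact (signed_aut_comp (preimage_signed_aut Hf) (signed_aut_translate x Hf)). Qed.

Lemma twist_hom_at t : hom_at f x t -> twist t = t.
Proof. intro H. unfold twist. rewrite H, mulKg. apply preimage_f. Qed.

Lemma twist_not_hom_at t : ~ hom_at f x t -> twist t = t^-1.
Proof.
  intro H. unfold twist. rewrite (not_hom_at_mul Hf x t H), mulKg, <- (signed_aut_invg Hf).
  apply preimage_f.
Qed.
End Twist.

Section HomPartners.
Context {G : Grp} {f : G -> G} (Hf : signed_aut f).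

Lemma hom_partner_relation x y g :
  ~ hom_at f x y -> hom_at f x g -> x * g <> g * x ->
  y * g * y = g \/ (g * g = 1 /\ x * g * x^-1 = y * g * y^-1).
Proof.
  intros Hy Hg Hnc.
  (* The twist at [x] inverts [y] and fixes [g]; compare its value on [y * g]. *)
  assert (Hcases := signed_aut_mul_cases (twist_signed_aut Hf x) y g).
  rewrite (twist_not_hom_at Hf x y Hy), (twist_hom_at Hf x g Hg) in Hcases.
  destruct (classic (hom_at f x (y * g))) as [Hyg|Hyg].
  - rewrite (twist_hom_at Hf x _ Hyg) in Hcases. destruct Hcases as [E|E].
    + exfalso. apply mulIg in E. apply (not_hom_at_sq Hf x y Hy), involution_invg.
      now symmetry.
    + left. rewrite E. now gsimpl.
  - rewrite (twist_not_hom_at Hf x _ Hyg), invMg in Hcases.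
    assert (Cy := quat_pair_conjl (not_hom_at_quat Hf x y Hy)).
    assert (Cyg := quat_pair_conjl (not_hom_at_quat Hf x _ Hyg)).
    assert (Hxg : x * g * x^-1 = y * g^-1 * y^-1).
    { transitivity (y * ((x * y * x^-1) * (x * g * x^-1))); [rewrite Cy; now gsimpl|].
      transitivity (y * (x * (y * g) * x^-1)); [now gsimpl|].
      rewrite Cyg. now gsimpl. }
    destruct Hcases as [E|E].
    + exfalso. apply Hnc.
      assert (H : x * g * x^-1 = g) by (rewrite Hxg; lmul y in E; gsimpl; exact E).
      now rmul x in H.
    + apply mulIg in E. right. split; [now apply involution_invg|].
      now rewrite Hxg, E.
Qed.

Lemma hom_partner_commute_noninvolution x y g :
  ~ hom_at f x y -> hom_at f x g -> g * g <> 1 -> x * g = g * x.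
Proof.
  intros Hy Hg Hgg. apply NNPP. intro Hnc.
  destruct (hom_partner_relation x y g Hy Hg Hnc) as [D1|[D1 _]]; [|contradiction].
  destruct (hom_partner_relation x (x * y) g (not_hom_at_mulr Hf x y Hy) Hg Hnc)
    as [D2|[D2 _]]; [|contradiction].
  assert (E : y^-1 * x * y * g * x * y = g * y).
  { transitivity (y^-1 * (x * y * g * (x * y))); [now gsimpl|].
    rewrite D2, <- D1 at 1. now gsimpl. }
  rewrite (quat_pair_conjr (not_hom_at_quat Hf x y Hy)) in E.
  rmul y^-1 in E. lmul x in E. apply Hnc. now symmetry.
Qed.

Section InvolutionPartner.
Variables x y g : G.
Hypotheses (Hy : ~ hom_at f x y) (Hg : hom_at f x g) (Hnc : x * g <> g * x).
Hypothesis g2 : g * g = 1.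

Lemma involution_partner_gxg : g * x * g = x^-1.
Proof.
  assert (Hxg2 : x * g * (x * g) = 1).
  { apply NNPP. intro N. apply Hnc.
    assert (C := hom_partner_commute_noninvolution x y (x * g) Hy (hom_at_mulr Hf x g Hg) N).
    now lmul x^-1 in C. }
  lmul x^-1 in Hxg2. gsimpl. exact Hxg2.
Qed.

Lemma involution_partner_commute_sq : g * (x * x) = x * x * g.
Proof.
  assert (E : g * (x * x) * g = x * x).
  { transitivity (g * x * g * (g * x * g)).
    - gsimpl. rewrite (mulgA g g), g2. now gsimpl.
    - rewrite involution_partner_gxg, <- invMg.
      apply invg_involution, (quat_pair_sq_involution (not_hom_at_quat Hf x y Hy)). }
  rmul g in E. rewrite g2, mulg1 in E. rewrite E. now gsimpl.
Qed.

Lemma involution_partner_conj : x * g * x^-1 = g * (x * x).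
Proof.
  rewrite <- involution_partner_gxg. gsimpl. rewrite (mulgA g g), g2, mul1g.
  rewrite involution_partner_commute_sq. now gsimpl.
Qed.

Lemma involution_partner_commute_xy : y * g * y = g -> g * (x * y) = x * y * g.
Proof.
  intro D1. assert (Hq := not_hom_at_quat Hf x y Hy).
  assert (Hgyg : g * y * g = y^-1).
  { apply (mulgI y). rewrite mulgV, !mulgA, D1. exact g2. }
  assert (Hxy : x^-1 * y^-1 = x * y).
  { apply (mulgI x). rewrite mulKVg, mulgA, (proj2 Hq). symmetry. apply mul_eq1_invl.
    rewrite <- mulgA. exact (quat_pair_sq_involution (quat_pair_sym Hq)). }
  assert (E : g * (x * y) * g = x * y).
  { transitivity (g * x * g * (g * y * g)).
    - gsimpl. rewrite (mulgA g g), g2. now gsimpl.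
    - now rewrite involution_partner_gxg, Hgyg. }
  rmul g in E. rewrite g2, mulg1 in E. rewrite E. now gsimpl.
Qed.

Lemma involution_partner_false : False.
Proof.
  assert (Hq := not_hom_at_quat Hf x y Hy).
  destruct (hom_partner_relation x y g Hy Hg Hnc) as [D1|[_ D1]];
    destruct (hom_partner_relation x (x * y) g (not_hom_at_mulr Hf x y Hy) Hg Hnc)
      as [D2|[_ D2]].
  - rewrite <- mulgA, (involution_partner_commute_xy D1) in D2. rmul g^-1 in D2.
    apply (not_hom_at_sq Hf x y Hy). rewrite <- (proj1 Hq) at 1. gsimpl. exact D2.
  - rewrite <- (involution_partner_commute_xy D1) in D2. gsimpl in D2.
    apply Hnc. rmul x in D2. exact D2.
  - assert (Hyg : y * g = g * (x * x) * y) by (rewrite <- involution_partner_conj, D1; now gsimpl).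
    apply (not_hom_at_sq Hf x y Hy). rewrite <- (proj2 Hq).
    apply (mulgI g). rewrite mulg1. rewrite <- D2 at 2. symmetry.
    transitivity (x * g * (x * x) * (y * x * y)); [rewrite <- (mulgA x y g), Hyg; now gsimpl|].
    rewrite (proj1 (quat_pair_sym Hq)).
    transitivity (x * g * x^-1 * (x * x) * (x * x)); [now gsimpl|].
    rewrite involution_partner_conj, <- (mulgA (g * (x * x))), (quat_pair_sq_involution Hq).
    apply mulg1.
  - apply Hnc.
    assert (E : x * g * x^-1 = x * (x * g * x^-1) * x^-1)
      by (rewrite D2 at 1; rewrite D1; now gsimpl).
    gsimpl in E. apply mulgI in E. rmul x in E. rmul x in E. now symmetry.
Qed.
End InvolutionPartner.

Lemma hom_partner_commute x y g : ~ hom_at f x y -> hom_at f x g -> x * g = g * x.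
Proof.
  intros Hy Hg. apply NNPP. intro Hnc.
  destruct (classic (g * g = 1)) as [g2|g2].
  - exact (involution_partner_false x y g Hy Hg Hnc g2).
  - exact (Hnc (hom_partner_commute_noninvolution x y g Hy Hg g2)).
Qed.

Lemma not_hom_at_commute_hom_pair x y u v :
  ~ hom_at f x y -> hom_at f u v -> u * v <> v * u -> x * u = u * x.
Proof.
  intros Hxy Huv Hnc. destruct (classic (hom_at f x u)) as [H|H].
  - exact (hom_partner_commute x y u Hxy H).
  - exfalso. exact (Hnc (hom_partner_commute u x v (not_hom_at_sym Hf x u H) Huv)).
Qed.

Lemma hom_pair_commute x y u v : ~ hom_at f x y -> hom_at f u v -> u * v = v * u.
Proof.
  intros Hxy Huv. apply NNPP. intro Hnc.
  assert (Hyx := not_hom_at_sym Hf x y Hxy).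
  assert (Hvu := hom_at_sym Hf u v Hnc Huv).
  assert (Cxu := not_hom_at_commute_hom_pair x y u v Hxy Huv Hnc).
  assert (Cyu := not_hom_at_commute_hom_pair y x u v Hyx Huv Hnc).
  assert (Cyv := not_hom_at_commute_hom_pair y x v u Hyx Hvu (fun E => Hnc (eq_sym E))).
  assert (Hw : ~ hom_at f x (y * u)).
  { intro H. apply (not_hom_at_noncommute Hf x y Hxy), (mulIg u).
    rewrite <- mulgA, (hom_partner_commute x y _ Hxy H), <- mulgA, <- Cxu. now gsimpl. }
  assert (Hwv : ~ hom_at f (y * u) v).
  { intro H. apply Hnc, (mulgI y).
    rewrite mulgA, (hom_partner_commute _ x v (not_hom_at_sym Hf _ _ Hw) H), (mulgA y v), Cyv.
    now gsimpl. }
  assert (F := not_hom_at_flip Hf _ _ Hwv).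
  rewrite <- mulgA, (commute_hom_at Hf y (u * v)), Huv, (commute_hom_at Hf y u Cyu) in F
    by (now rewrite mulgA, Cyu, <- mulgA, Cyv, mulgA).
  assert (Cf : f y * f v = f v * f y).
  { now rewrite <- (commute_hom_at Hf y v Cyv), <- (commute_hom_at Hf v y (eq_sym Cyv)), Cyv. }
  apply Hnc, (signed_aut_inj Hf). rewrite Huv, Hvu.
  apply (mulgI (f y)). rewrite F, mulgA, <- Cf. now gsimpl.
Qed.
End HomPartners.

Definition commute_or_invert (G : Grp) : Prop :=
  forall u v : G, v * u = u * v \/ v * u = u * v^-1.

Theorem signed_aut_dichotomy {G : Grp} {f : G -> G} (Hf : signed_aut f) :
  (forall x y, hom_at f x y) \/
  (commute_or_invert G /\ exists x y : G, x * y <> y * x).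
Proof.
  destruct (classic (forall x y, hom_at f x y)) as [H|H]; [now left|right].
  apply not_all_ex_not in H as [x H]. apply not_all_ex_not in H as [y H].
  split; [|exists x, y; exact (not_hom_at_noncommute Hf x y H)].
  intros u v. destruct (classic (u * v = v * u)) as [C|C]; [now left|right].
  destruct (classic (hom_at f u v)) as [Huv|Huv].
  - exfalso. exact (C (hom_pair_commute Hf x y u v H Huv)).
  - assert (E := proj1 (quat_pair_sym (not_hom_at_quat Hf u v Huv))).
    rmul v^-1 in E. gsimpl. exact E.
Qed.

(** * Splitting off a quaternion subgroup *)

Lemma sig_eq {A : Type} {P : A -> Prop} (u v : {a | P a}) : proj1_sig u = proj1_sig v -> u = v.
Proof. apply eq_sig_hprop. intros a. apply proof_irrelevance. Qed.

Section Subgroup.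
Context {G : Grp} (M : G -> Prop).
Hypothesis M1 : M 1.
Hypothesis Mmul : forall a b, M a -> M b -> M (a * b).
Hypothesis Minv : forall a, M a -> M a^-1.

Definition subgrp_mul (a b : {c | M c}) : {c | M c} :=
  exist _ (proj1_sig a * proj1_sig b) (Mmul _ _ (proj2_sig a) (proj2_sig b)).
Definition subgrp_inv (a : {c | M c}) : {c | M c} :=
  exist _ (proj1_sig a)^-1 (Minv _ (proj2_sig a)).
Definition subgrp_one : {c | M c} := exist _ 1 M1.

Lemma subgrp_mulA a b c : subgrp_mul a (subgrp_mul b c) = subgrp_mul (subgrp_mul a b) c.
Proof. apply sig_eq, mulgA. Qed.
Lemma subgrp_mul1 a : subgrp_mul subgrp_one a = a.
Proof. apply sig_eq, mul1g. Qed.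
Lemma subgrp_mulV a : subgrp_mul (subgrp_inv a) a = subgrp_one.
Proof. apply sig_eq, mulVg. Qed.

Definition subgrp : Grp := {|
  carrier := {c | M c};
  gmul := subgrp_mul; ginv := subgrp_inv; gone := subgrp_one;
  gmulA := subgrp_mulA; gmul1 := subgrp_mul1; gmulV := subgrp_mulV |}.
End Subgroup.

Section ComplementOfInvolution.
Context {G : Grp} (C : G -> Prop) (e : G).
Hypotheses (C1 : C 1) (Cmul : forall a b, C a -> C b -> C (a * b)).
Hypotheses (Csq : forall c, C c -> c * c = 1) (e1 : e <> 1).

Definition complement_candidate (M : G -> Prop) : Prop :=
  (forall m, M m -> C m) /\ (forall a b, M a -> M b -> M (a * b)) /\ ~ M e.

Definition adjoin (A : G -> Prop) (c : G) : G -> Prop :=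
  fun t => exists m, (A m \/ m = 1) /\ (t = m \/ t = c * m).

Lemma C_commute c d : C c -> C d -> c * d = d * c.
Proof. intros Hc Hd. apply involutions_commute; auto. Qed.

Lemma adjoin_complement_candidate A c :
  complement_candidate A -> C c -> ~ A (e * c) -> e * c <> 1 ->
  complement_candidate (adjoin A c).
Proof.
  intros [AC [Amul Ae]] Cc Nec Nec1.
  assert (A1C : forall m, A m \/ m = 1 -> C m) by (intros m [Am| ->]; auto).
  assert (A1mul : forall m m', A m \/ m = 1 -> A m' \/ m' = 1 -> A (m * m') \/ m * m' = 1).
  { intros m m' [Am| ->] [Am'| ->]; rewrite ?mul1g, ?mulg1; auto. }
  split; [|split].
  - intros t [m [Hm [-> | ->]]]; auto.
  - intros t t' [m [Hm Ht]] [m' [Hm' Ht']]. exists (m * m'). split; [now apply A1mul|].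
    destruct Ht as [-> | ->], Ht' as [-> | ->]; [now left|right|right|left].
    + now rewrite mulgA, (C_commute m c (A1C m Hm) Cc), mulgA.
    + now rewrite mulgA.
    + rewrite (C_commute c m Cc (A1C m Hm)). gsimpl. now rewrite (mulgA c c), Csq, mul1g.
  - intros [m [[Am| ->] [Em|Em]]].
    + rewrite Em in Ae. exact (Ae Am).
    + apply Nec. rewrite Em, (C_commute c m Cc (AC m Am)), <- mulgA, (Csq c Cc), mulg1. exact Am.
    + exact (e1 Em).
    + apply Nec1. rewrite Em, mulg1. exact (Csq c Cc).
Qed.

Lemma exists_complement_of_involution :
  exists M : G -> Prop, complement_candidate M /\ M 1 /\ forall c, C c -> M c \/ M (e * c).
Proof.
  destruct (@classical_sets.Zorn_bigcup G complement_candidate) as [A [HA Amax]].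
  - intros F FP Ftot. cbv [classical_sets.bigcup]. split; [|split]; cbn.
    + intros m [X FX Xm]. exact (proj1 (FP X FX) m Xm).
    + intros a b [X FX Xa] [Y FY Yb].
      destruct (Ftot X Y FX FY) as [S|S]; [exists Y | exists X]; auto;
        [apply (proj1 (proj2 (FP Y FY))) | apply (proj1 (proj2 (FP X FX)))]; auto.
    + intros [X FX Xe]. exact (proj2 (proj2 (FP X FX)) Xe).
  - assert (Hext : forall c, C c -> ~ A (e * c) -> e * c <> 1 -> A c).
    { intros c Cc Nec Nec1. apply NNPP. intro Nc.
      apply (Amax (adjoin A c)); [split|now apply adjoin_complement_candidate].
      - intros t At. exists t. auto.
      - intro S. apply Nc, S. exists 1. rewrite mulg1. auto. }
    assert (A1 : A 1) by (apply Hext; rewrite ?mulg1; [exact C1 | apply HA | exact e1]).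
    exists A. split; [exact HA|split; [exact A1|]].
    intros c Cc. destruct (classic (A (e * c))) as [H|H]; [now right|left].
    apply Hext; [exact Cc | exact H | intro E; rewrite E in H; exact (H A1)].
Qed.
End ComplementOfInvolution.

Definition q8one : Q8 := (false, Q1).
Definition q8inv (p : Q8) : Q8 := match snd p with Q1 => p | _ => (negb (fst p), snd p) end.

Lemma q8mulVp p : q8mul (q8inv p) p = q8one.
Proof. destruct p as [[|] [| | |]]; reflexivity. Qed.

Lemma q8mulKp p r : q8mul p (q8mul (q8inv p) r) = r.
Proof. destruct p as [[|] [| | |]], r as [[|] [| | |]]; reflexivity. Qed.

Lemma q8mulp1 p : q8mul p q8one = p.
Proof. destruct p as [[|] [| | |]]; reflexivity. Qed.

Section InternalDirectProduct.
Context {G : Grp} (iota : Q8 -> G) (M : G -> Prop).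
Hypothesis iota_mul : forall p q, iota (q8mul p q) = iota p * iota q.
Hypotheses (M1 : M 1) (Mmul : forall a b, M a -> M b -> M (a * b)).
Hypothesis Msq : forall m, M m -> m * m = 1.
Hypothesis M_iota_comm : forall m p, M m -> m * iota p = iota p * m.
Hypothesis iota_M : forall p, M (iota p) -> p = q8one.
Hypothesis iota_M_gen : forall g, exists p m, M m /\ g = iota p * m.

Lemma iota_one : iota q8one = 1.
Proof.
  apply (mulgI (iota q8one)). rewrite mulg1, <- iota_mul. reflexivity.
Qed.

Lemma iota_inv p : iota (q8inv p) = (iota p)^-1.
Proof. apply mul_eq1_invl. now rewrite <- iota_mul, q8mulVp, iota_one. Qed.

Lemma Minv m : M m -> M m^-1.
Proof. intro Hm. now rewrite (invg_involution m (Msq m Hm)). Qed.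

Lemma iota_M_unique p p' m m' :
  M m -> M m' -> iota p * m = iota p' * m' -> p = p' /\ m = m'.
Proof.
  intros Hm Hm' E.
  assert (Hp : q8mul (q8inv p') p = q8one).
  { apply iota_M. rewrite iota_mul, iota_inv.
    replace (iota p) with (iota p' * m' * m^-1) by (rewrite <- E; now gsimpl).
    gsimpl. now apply Mmul, Minv. }
  assert (Epp : p = p') by now rewrite <- (q8mulKp p' p), Hp, q8mulp1.
  split; [exact Epp|]. rewrite Epp in E. now apply mulgI in E.
Qed.

Theorem internal_direct_product_hamiltonian2 : hamiltonian2 G.
Proof.
  set (B := subgrp M M1 Mmul Minv).
  set (pair_val := fun pb : Q8 * B => iota (fst pb) * proj1_sig (snd pb)).
  assert (Hdec : forall g, exists pb, pair_val pb = g).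
  { intro g. destruct (iota_M_gen g) as [p [m [Hm ->]]]. now exists (p, exist _ m Hm). }
  set (split_of := fun g => proj1_sig (constructive_indefinite_description _ (Hdec g))).
  assert (split_ofK : forall g, pair_val (split_of g) = g).
  { intro g. exact (proj2_sig (constructive_indefinite_description _ (Hdec g))). }
  assert (pair_val_inj : forall pb pb', pair_val pb = pair_val pb' -> pb = pb').
  { intros [p [m Hm]] [p' [m' Hm']] E.
    destruct (iota_M_unique p p' m m' Hm Hm' E) as [-> ->]. f_equal. now apply sig_eq. }
  assert (split_of_val : forall pb, split_of (pair_val pb) = pb).
  { intro pb. apply pair_val_inj, split_ofK. }
  exists B. split; [|split].
  - intros a b. apply sig_eq, involutions_commute; apply Msq; try apply Mmul; apply proj2_sig.
  - intro b. apply sig_eq, Msq, proj2_sig.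
  - exists split_of. split; [now exists pair_val|].
    intros g h. rewrite <- (split_of_val (_, _)). f_equal.
    rewrite <- (split_ofK g), <- (split_ofK h) at 1. unfold pair_val. cbn.
    rewrite iota_mul. gsimpl. f_equal. rewrite !mulgA. f_equal.
    apply M_iota_comm, proj2_sig.
Qed.
End InternalDirectProduct.

Section CommuteOrInvertGroups.
Context {G : Grp} (Hci : commute_or_invert G) {x y : G} (Hxy : x * y <> y * x).

Lemma noncommuting_quat_pair : quat_pair x y.
Proof.
  assert (Hyx : y * x * y = x).
  { destruct (Hci x y) as [E|E]; [now destruct Hxy|]. rewrite E. now gsimpl. }
  assert (Hxyx : x * y * x = y).
  { destruct (Hci y x) as [E|E]; [now destruct Hxy|]. rewrite E. now gsimpl. }
  split; [exact Hxyx|]. rewrite <- Hyx at 2. rewrite <- Hxyx at 3. now gsimpl.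
Qed.

Local Notation e := (x * x).

Lemma e_sq : e * e = 1.
Proof. exact (quat_pair_sq_involution noncommuting_quat_pair). Qed.

Lemma e_neq1 : e <> 1.
Proof.
  intro E. apply Hxy. rewrite (quat_pair_mulC noncommuting_quat_pair).
  now rewrite (invg_involution x E).
Qed.

Lemma e_central g : g * e = e * g.
Proof.
  destruct (Hci g x) as [E|E].
  - rewrite !mulgA, <- E, <- (mulgA x g x), <- E. now gsimpl.
  - symmetry. rewrite <- (mulgA x x g), E, (mulgA x g), E, <- mulgA, <- invMg.
    now rewrite (invg_involution _ e_sq).
Qed.

Definition centralizes (c : G) : Prop := c * x = x * c /\ c * y = y * c.

Lemma centralizes_sq c : centralizes c -> c * c = 1.
Proof.
  intros [Cx Cy].
  destruct (Hci y (x * c)) as [E|E]; rewrite <- (mulgA x c y), Cy, (mulgA x y c) in E.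
  - exfalso. apply Hxy. rewrite (mulgA y x c) in E. now apply mulIg in E.
  - assert (Cx' : c^-1 * x^-1 = x^-1 * c^-1) by now rewrite <- !invMg, Cx.
    rewrite invMg, Cx', mulgA, <- (quat_pair_mulC noncommuting_quat_pair) in E.
    apply mulgI in E. apply involution_invg. now symmetry.
Qed.

Lemma centralizes_mul c d : centralizes c -> centralizes d -> centralizes (c * d).
Proof.
  intros [Cx Cy] [Dx Dy]. split.
  - now rewrite <- mulgA, Dx, mulgA, Cx, <- mulgA.
  - now rewrite <- mulgA, Dy, mulgA, Cy, <- mulgA.
Qed.

Lemma centralizes1 : centralizes 1.
Proof. split; now rewrite mul1g, mulg1. Qed.

Lemma centralizes_e : centralizes e.
Proof. split; symmetry; apply e_central. Qed.

Definition qsign (b : bool) : G := if b then e else 1.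
Definition qunit (u : QU) : G := match u with Q1 => 1 | Qi => x | Qj => y | Qk => x * y end.
Definition qembed (p : Q8) : G := qsign (fst p) * qunit (snd p).

Lemma qsign_xor a b : qsign (xorb a b) = qsign a * qsign b.
Proof. destruct a, b; cbn; rewrite ?mul1g, ?mulg1; try reflexivity. symmetry. apply e_sq. Qed.

Lemma qsign_central b g : qsign b * g = g * qsign b.
Proof. destruct b; cbn; [symmetry; apply e_central | now rewrite mul1g, mulg1]. Qed.

Lemma qunit_mul u v : qunit u * qunit v = qsign (fst (qumul u v)) * qunit (snd (qumul u v)).
Proof.
  assert (Hq := noncommuting_quat_pair).
  assert (Hyinv : y^-1 = y * e) by (rewrite (proj2 Hq); symmetry; apply mul_eq1_invr;
    rewrite mulgA, <- (proj2 Hq); exact e_sq).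
  destruct u, v; cbn; rewrite ?mul1g, ?mulg1; try reflexivity.
  - now rewrite mulgA.
  - rewrite (quat_pair_mulC (quat_pair_sym Hq)), Hyinv, mulgA. apply e_central.
  - symmetry. exact (proj2 Hq).
  - now rewrite mulgA, (proj1 (quat_pair_sym Hq)).
  - exact (proj1 Hq).
  - rewrite <- mulgA, <- (proj2 Hq). apply mulgA.
  - rewrite mulgA, (proj1 Hq). symmetry. exact (proj2 Hq).
Qed.

Lemma qembed_mul p q : qembed (q8mul p q) = qembed p * qembed q.
Proof.
  destruct p as [s u], q as [t v]. unfold q8mul, qembed. cbn.
  assert (Hm := qunit_mul u v). destruct (qumul u v) as [s' w]. cbn in Hm |- *.
  rewrite !qsign_xor.
  transitivity (qsign s * (qsign t * (qunit u * qunit v))); [rewrite Hm; now gsimpl|].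
  rewrite (mulgA (qsign t)), (qsign_central t). now gsimpl.
Qed.

Lemma qembed_centralizes p : centralizes (qembed p) -> snd p = Q1.
Proof.
  destruct p as [s u]. unfold qembed. cbn. intro H.
  assert (Hu : centralizes (qunit u)).
  { replace (qunit u) with (qsign s * (qsign s * qunit u)).
    - apply centralizes_mul; [destruct s; [apply centralizes_e | apply centralizes1] | exact H].
    - rewrite mulgA, <- qsign_xor. destruct s; apply mul1g. }
  destruct u; cbn in Hu; [reflexivity|exfalso..]; destruct Hu as [Hx Hy]; apply Hxy.
  - exact Hy.
  - now symmetry.
  - rewrite <- mulgA in Hx. apply mulgI in Hx. now symmetry.
Qed.

Lemma centralizes_of_conj (c : G) : c^-1 * x * c = x -> c^-1 * y * c = y -> centralizes c.
Proof. intros Hx Hy. lmul c in Hx. lmul c in Hy. split; now symmetry. Qed.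

Lemma conj_fix_or_inv (g a : G) : g^-1 * a * g = a \/ g^-1 * a * g = a^-1.
Proof. destruct (Hci g a) as [E|E]; [left|right]; lmul g^-1 in E; gsimpl; exact E. Qed.

Lemma exists_qunit_centralizes (g : G) : exists u, centralizes ((qunit u)^-1 * g).
Proof.
  assert (Hq := noncommuting_quat_pair).
  assert (Hconj : forall q a : G, (q^-1 * g)^-1 * a * (q^-1 * g) = g^-1 * (q * a * q^-1) * g)
    by (intros; now gsimpl).
  assert (Hinv : forall a : G, g^-1 * a * g = a^-1 -> g^-1 * a^-1 * g = a)
    by (intros a H; now rewrite conjg_invg, H, invgK).
  destruct (conj_fix_or_inv g x) as [gx|gx], (conj_fix_or_inv g y) as [gy|gy];
    [exists Q1 | exists Qi | exists Qj | exists Qk]; cbn;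
    apply centralizes_of_conj; rewrite Hconj.
  - now rewrite invg1, mulg1, mul1g.
  - now rewrite invg1, mulg1, mul1g.
  - now rewrite mulgK.
  - rewrite (quat_pair_conjl Hq). exact (Hinv y gy).
  - rewrite (quat_pair_conjl (quat_pair_sym Hq)). exact (Hinv x gx).
  - now rewrite mulgK.
  - transitivity (g^-1 * (x * (y * x * y^-1) * x^-1) * g); [now gsimpl|].
    rewrite (quat_pair_conjl (quat_pair_sym Hq)), mulgV, mul1g. exact (Hinv x gx).
  - transitivity (g^-1 * (x * y * x^-1) * g); [now gsimpl|].
    rewrite (quat_pair_conjl Hq). exact (Hinv y gy).
Qed.

Lemma centralizes_qembed_comm (m : G) (p : Q8) : centralizes m -> m * qembed p = qembed p * m.
Proof.
  intros [Cx Cy]. unfold qembed.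
  rewrite mulgA, <- qsign_central, <- !mulgA. f_equal.
  destruct (snd p); cbn; rewrite ?mul1g, ?mulg1; auto.
  now rewrite mulgA, Cx, <- mulgA, Cy, mulgA.
Qed.

Theorem commute_or_invert_hamiltonian2 : hamiltonian2 G.
Proof.
  destruct (exists_complement_of_involution centralizes e centralizes1 centralizes_mul
              centralizes_sq e_neq1) as [M [[MC [Mmul Me]] [M1 Mdec]]].
  apply (internal_direct_product_hamiltonian2 qembed M qembed_mul M1 Mmul).
  - intros m Hm. exact (centralizes_sq m (MC m Hm)).
  - intros m p Hm. exact (centralizes_qembed_comm m p (MC m Hm)).
  - intros [s u] Hp. assert (Hu := qembed_centralizes (s, u) (MC _ Hp)). cbn in Hu. subst u.
    destruct s; [|reflexivity]. exfalso. apply Me. cbv [qembed qsign qunit fst snd] in Hp.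
    now rewrite mulg1 in Hp.
  - intro g. destruct (exists_qunit_centralizes g) as [u Hu].
    destruct (Mdec _ Hu) as [Hm|Hm].
    + exists (false, u), ((qunit u)^-1 * g). split; [exact Hm|]. unfold qembed; cbn. now gsimpl.
    + exists (true, u), (e * ((qunit u)^-1 * g)). split; [exact Hm|]. unfold qembed; cbn.
      rewrite <- (e_central (qunit u)), <- (mulgA (qunit u) e), (mulgA e e), e_sq, mul1g.
      now gsimpl.
Qed.
End CommuteOrInvertGroups.

(** * Colour-permuting automorphisms of the complete Cayley graph *)

Lemma colour_permuting_signed_aut {G : Grp} (phi : G -> G) :
  colour_permuting (fun s : G => s <> 1) phi -> signed_aut (fun t => (phi 1)^-1 * phi t).
Proof.
  intros [[[phi_inv [Hl Hr]] _] Hcol]. constructor.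
  - intros s t E. apply mulgI in E. now rewrite <- (Hl s), <- (Hl t), E.
  - intro w. exists (phi_inv (phi 1 * w)). now rewrite Hr, mulKg.
  - intros a s. destruct (classic (s = 1)) as [-> | Hs].
    + left. now rewrite mulg1, mulVg, mulg1.
    + assert (Hadj : cay_adj (fun s : G => s <> 1) a (a * s))
        by (unfold cay_adj; now rewrite mulKg).
      assert (Hadj1 : cay_adj (fun s : G => s <> 1) 1 s)
        by (unfold cay_adj; now rewrite invg1, mul1g).
      assert (Hsc : same_colour a (a * s) 1 s).
      { intro t. unfold edge_colour. rewrite mulKg, invg1, mul1g, mulg1, invMg, mulgKV. tauto. }
      destruct (proj1 (Hcol a (a * s) 1 s Hadj Hadj1 Hsc ((phi a)^-1 * phi (a * s)))
                      (or_introl eq_refl)) as [E|E]; [left|right]; rewrite <- (mulKVg (phi a) (phi (a * s))), E; now gsimpl.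
Qed.

Lemma signed_aut_hom_group_aut {G : Grp} {f : G -> G} (Hf : signed_aut f) :
  (forall x y, hom_at f x y) -> group_aut f.
Proof.
  intro Hhom. split; [|exact Hhom].
  exists (preimage Hf). split; [apply preimage_f | apply preimageK].
Qed.

Lemma affine_of_translate_aut {G : Grp} (phi : G -> G) :
  group_aut (fun t => (phi 1)^-1 * phi t) -> affine phi.
Proof.
  intro Haut. pose proof Haut as [[inv [_ Hr]] Hmul].
  exists (fun t => (phi 1)^-1 * phi t), (inv (phi 1)). split; [exact Haut|].
  cbv beta in *. intro t. now rewrite Hmul, Hr, mulKVg.
Qed.

Theorem corollary4p8 (G : Grp) :
  ~ hamiltonian2 G -> strongly_CCA (fun s : G => s <> gone).
Proof.
  intros not_ham phi Hphi.
  assert (Hpsi := colour_permuting_signed_aut phi Hphi).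
  destruct (signed_aut_dichotomy Hpsi) as [Hhom | [Hci [x [y Hxy]]]].
  - exact (affine_of_translate_aut phi (signed_aut_hom_group_aut Hpsi Hhom)).
  - exfalso. exact (not_ham (commute_or_invert_hamiltonian2 Hci Hxy)).
Qed.
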